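(* $\mathrm{cov}^{*}(\mathcal{S}pl)=\mathfrak{r}$.
   Context: For an infinite $A\subseteq\omega$, let $S(A)$ be the set of all $\sigma\in2^{<\omega}$ such that $\sigma$ is constant on $A\cap\mathrm{dom}(\sigma)$. The splitting ideal $\mathcal{S}pl$ is the ideal on $2^{<\omega}$ generated by the sets $S(A)$, $A\in[\omega]^{\omega}$ (i.e. its elements are the subsets of finite unions of such sets). For a tall ideal $\mathcal{J}$ on a countable set $X$, $\mathrm{cov}^{*}(\mathcal{J})=\min\{|\mathcal{F}|:\mathcal{F}\subseteq\mathcal{J}$ and for every infinite $Y\subseteq X$ there is $F\in\mathcal{F}$ with $|F\cap Y|=\omega\}$. $\mathfrak{r}$ is the reaping number: the least size of a family $\mathcal{R}\subseteq[\omega]^\omega$ such that no single $B\in[\omega]^\omega$ splits every member of $\mathcal{R}$ (where $B$ splits $A$ if $A\cap B$ and $A\setminus B$ are both infinite). *)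

From mathcomp Require Import all_boot.
From mathcomp Require Import boolp classical_sets cardinality.
Set Implicit Arguments. Unset Strict Implicit. Unset Printing Implicit Defensive.
Local Open Scope classical_set_scope.

(* 2^{<omega} is represented by seq bool; dom(sigma) = {0,...,size sigma - 1}. *)

Definition S_of (A : set nat) : set (seq bool) :=
  [set s | forall i j, A i -> A j -> i < size s -> j < size s ->
             nth false s i = nth false s j].

Definition Spl : set (set (seq bool)) :=
  [set X | exists As : seq (set nat),
     (forall A, A \in As -> infinite_set A) /\
     (forall s, X s -> exists2 A, A \in As & S_of A s)].

Definition cov_star_family {X : Type} (J : set (set X)) (F : set (set X)) : Prop :=
  F `<=` J /\
  forall Y : set X, infinite_set Y -> exists2 Z, F Z & infinite_set (Z `&` Y).

Definition splits (B A : set nat) : Prop :=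
  infinite_set (A `&` B) /\ infinite_set (A `\` B).

Definition reaping_family (R : set (set nat)) : Prop :=
  (forall A, R A -> infinite_set A) /\
  ~ (exists B : set nat, infinite_set B /\ forall A, R A -> splits B A).

(* Equality of two minimum cardinalities: each class's minimum is
   bounded by every member of the other class. *)
Definition min_card_eq {T U : Type} (P : set (set T)) (Q : set (set U)) : Prop :=
  (forall F, P F -> exists2 G, Q G & (G #<= F)%card) /\
  (forall G, Q G -> exists2 F, P F & (F #<= G)%card).

From mathcomp Require Import all_boot.
From mathcomp Require Import boolp classical_sets functions cardinality.

(** If each member of a cov^*-witnessing family F ⊆ Spl is covered by sets
    S(A_1), ..., S(A_k), then all these A_i form a reaping family: a set B
    splitting every A_i yields the branch of the characteristic function of B,
    an infinite subset of 2^{<ω} that meets every S(A_i), hence every member of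
    F, in a finite set.
    Conversely, let R be reaping and Y ⊆ 2^{<ω} infinite. By König's lemma Y
    accumulates at a branch x, so there are σ_j ∈ Y agreeing with x below N_j
    and of length below N_{j+1}. Some A ∈ R eventually avoids the intervals
    [N_j, N_{j+1}) of one parity, and some C ∈ R makes x eventually constant on
    the elements of A whose rank in A lies in C. Then S(D), for D the set of
    these elements, contains infinitely many σ_j.
    The counting on both sides rests on |X × X| = |X| for infinite X, proved
    from Zorn's lemma as in Hessenberg's theorem. *)

Set Implicit Arguments. Unset Strict Implicit. Unset Printing Implicit Defensive.
Local Open Scope classical_set_scope.
Local Open Scope card_scope.

(** * Cardinal arithmetic *)

Lemma card_le_inj T U (A : set T) (B : set U) (f : T -> U) :
  set_fun A B f -> set_inj A f -> A #<= B.
Proof.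
elim/Ppointed: U => U in B f *.
  have -> : A = set0 by apply/seteqP; split=> // a _; case: (no (f a)).
  by move=> _ _; exact: card_ge0.
by move=> fAB finj; apply/pcard_leP/injfunPex; exists f.
Qed.

Lemma card_le_injP T U (A : set T) (B : set U) :
  A !=set0 -> A #<= B -> exists2 f : T -> U, set_fun A B f & set_inj A f.
Proof.
move=> [a Aa]; elim/Ppointed: U => U in B *; last by move=> /pcard_leP/injfunPex.
have -> : B = set0 by apply/seteqP; split=> // b; case: (no b).
by move=> /card_le0P A0; rewrite A0 in Aa.
Qed.

Lemma card_le_setX T T' U U' (A : set T) (A' : set T') (B : set U) (B' : set U') :
  A #<= B -> A' #<= B' -> A `*` A' #<= B `*` B'.
Proof.
move=> AB A'B'; have [[[a a'] [/= Aa Aa']]|AA'0] := pselect (A `*` A' !=set0); last first.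
  suff -> : A `*` A' = set0 by exact: card_ge0.
  by apply/seteqP; split=> // p Ap; apply: AA'0; exists p.
have [f fAB finj] := card_le_injP (ex_intro _ a Aa) AB.
have [g gAB ginj] := card_le_injP (ex_intro _ a' Aa') A'B'.
apply: (@card_le_inj _ _ _ _ (fun p => (f p.1, g p.2))).
  by move=> [x y] [/= Ax Ay]; split; [exact: fAB|exact: gAB].
move=> [x y] [x' y'] /set_mem[/= Ax Ay] /set_mem[/= Ax' Ay'] [fx gy].
by congr pair; [apply: finj|apply: ginj]; rewrite ?inE.
Qed.

Lemma card_le_setU T (A B : set T) : B #<= A -> A `|` B #<= A `*` [set: bool].
Proof.
move=> BA; have [g gBA ginj] : exists2 g : T -> T, set_fun B A g & set_inj B g.
  have [/card_le_injP/(_ BA)//|B0] := pselect (B !=set0).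
  by exists id => [x|x y /set_mem] Bx; case: B0; exists x.
apply: (@card_le_inj _ _ _ _ (fun x => if `[< A x >] then (x, true) else (g x, false))).
  by move=> x ABx; case: asboolP => // nAx; split=> //; apply: gBA; case: ABx.
move=> x y /set_mem ABx /set_mem ABy.
case: asboolP => Ax; case: asboolP => Ay //= [xy] //.
by apply: (ginj x y) xy; apply: mem_set; [case: ABx|case: ABy].
Qed.

Lemma chain_common_ub T (F : set (set T)) G1 G2 : total_on F subset ->
  F G1 -> F G2 -> exists2 G, F G & G1 `<=` G /\ G2 `<=` G.
Proof.
move=> Ftot FG1 FG2; have [G12|G21] := Ftot _ _ FG1 FG2.
  by exists G2 => //; split=> // x.
by exists G1 => //; split=> // x.
Qed.

Lemma Zorn_bigcup_nonempty T (P : set (set T)) : P !=set0 ->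
  (forall F, F `<=` P -> F !=set0 -> total_on F subset -> P (\bigcup_(G in F) G)) ->
  exists A, P A /\ forall B, A `<` B -> ~ P B.
Proof.
move=> [A0 PA0] Pchain.
have [A [PA Amax]] :
    exists A, (A = set0 \/ P A) /\ forall B, A `<` B -> ~ (B = set0 \/ P B).
  apply: Zorn_bigcup => F FP Ftot.
  have [[x [G FG Gx]]|U0] := pselect ((\bigcup_(G in F) G) !=set0); last first.
    by left; apply/seteqP; split=> // x Ux; apply: U0; exists x.
  right; have -> : \bigcup_(G in F) G = \bigcup_(G in F `&` P) G.
    apply/seteqP; split=> y [H FH Hy]; last by exists H => //; case: FH.
    by exists H => //; split=> //; case: (FP _ FH) => // H0; rewrite H0 in Hy.
  apply: Pchain; first by move=> ? [].
    by exists G; split=> //; case: (FP _ FG) => // G0; rewrite G0 in Gx.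
  by move=> G1 G2 [FG1 _] [FG2 _]; apply: Ftot.
have {}PA : P A.
  case: PA => // A0'; rewrite A0' in Amax *.
  have [[x A0x]|A0e] := pselect (A0 !=set0); last first.
    by have <- : A0 = set0 by apply/seteqP; split=> // x A0x; apply: A0e; exists x.
  by exfalso; apply: (Amax A0); [split=> // /(_ x A0x)|right].
by exists A; split=> // B AB PB; apply: (Amax B AB); right.
Qed.

Definition one_to_one T U (G : set (T * U)) :=
  forall p q, G p -> G q -> (p.1 = q.1 <-> p.2 = q.2).

Lemma one_to_one_fun T U (G : set (T * U)) (A : set T) (u0 : U) :
  one_to_one G -> (forall a, A a -> exists b, G (a, b)) ->
  exists2 f : T -> U, (forall a, A a -> G (a, f a)) & set_inj A f.
Proof.
move=> Ginj AG; have /choice[f Gf] : forall a, exists b, A a -> G (a, b).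
  by move=> a; have [/AG[b Gab]|nAa] := pselect (A a); [exists b|exists u0].
exists f => // a a' /set_mem Aa /set_mem Aa'.
exact: (Ginj _ _ (Gf a Aa) (Gf a' Aa')).2.
Qed.

Lemma bigcup_one_to_one T U (F : set (set (T * U))) :
  F `<=` @one_to_one T U -> total_on F subset -> one_to_one (\bigcup_(G in F) G).
Proof.
move=> Finj Ftot p q [G1 FG1 G1p] [G2 FG2 G2q].
have [G FG [G1G G2G]] := chain_common_ub Ftot FG1 FG2.
exact: Finj FG p q (G1G _ G1p) (G2G _ G2q).
Qed.

Lemma card_le_total T U (A : set T) (B : set U) : A #<= B \/ B #<= A.
Proof.
have [[t0 At0]|A0] := pselect (A !=set0); last first.
  by left; suff -> : A = set0 by []; apply/seteqP; split=> // a Aa; apply: A0; exists a.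
have [[u0 Bu0]|B0] := pselect (B !=set0); last first.
  by right; suff -> : B = set0 by []; apply/seteqP; split=> // b Bb; apply: B0; exists b.
pose P := [set G : set (T * U) | G `<=` A `*` B /\ one_to_one G].
have [G [[GAB Ginj] Gmax]] : exists G, P G /\ forall G', G `<` G' -> ~ P G'.
  apply: Zorn_bigcup => F FP Ftot; split; last by apply: bigcup_one_to_one => // G /FP[].
  by move=> p [G /FP[+ _] Gp]; apply.
have [Adom|/existsNP[a /not_implyP[Aa nGa]]] :=
  pselect (forall a, A a -> exists b, G (a, b)).
  left; have [f Gf finj] := one_to_one_fun u0 Ginj Adom.
  by apply: (card_le_inj _ finj) => a /Gf/GAB[].
have [Bdom|/existsNP[b /not_implyP[Bb nGb]]] :=
  pselect (forall b, B b -> exists a, G (a, b)).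
  right; have GTinj : one_to_one [set p | G (p.2, p.1)].
    by move=> p q Gp Gq; split=> /(Ginj _ _ Gp Gq).
  have [f Gf finj] := one_to_one_fun t0 GTinj Bdom.
  by apply: (card_le_inj _ finj) => b /Gf/GAB[].
exfalso; apply: (Gmax (G `|` [set (a, b)])).
  split; first exact: subsetUl.
  by move/(_ (a, b) (or_intror erefl)) => Gab; apply: nGa; exists b.
split; first by move=> p [/GAB//|->].
move=> p q [Gp|->] [Gq|->] //=; first exact: Ginj.
  by split=> e; exfalso; [apply: nGa; exists p.2|apply: nGb; exists p.1];
    rewrite -e; case: p Gp {e}.
by split=> e; exfalso; [apply: nGa; exists q.2|apply: nGb; exists q.1];
  rewrite e; case: q Gq {e}.
Qed.

Definition pairing T (Y : set T) (f : T * T -> T) :=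
  set_fun (Y `*` Y) Y f /\ set_inj (Y `*` Y) f.

Lemma pairing_card_le_setX T U (Y : set T) (A : set U) f :
  pairing Y f -> A #<= Y -> Y `*` A #<= Y.
Proof.
move=> [fY finj] AY; apply: card_le_trans (card_le_setX (card_lexx Y) AY) _.
exact: card_le_inj fY finj.
Qed.

Lemma pairing_extend T (Y Z : set T) f h : Y `&` Z = set0 -> pairing Y f ->
  set_fun ((Y `|` Z) `*` (Y `|` Z)) Z h -> set_inj ((Y `|` Z) `*` (Y `|` Z)) h ->
  pairing (Y `|` Z) (fun p => if `[< (Y `*` Y) p >] then f p else h p).
Proof.
move=> YZ0 [fY finj] hZ hinj; split=> [p YZp|p q /set_mem YZp /set_mem YZq].
  by case: asboolP => [/fY|_]; [left|right; apply: hZ].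
have disj x : Y x -> Z x -> False.
  by move=> Yx Zx; have : (Y `&` Z) x by []; rewrite YZ0.
case: asboolP => Yp; case: asboolP => Yq.
- by apply: finj; apply: mem_set.
- by move=> e; exfalso; apply: (disj (h q)); [rewrite -e; exact: fY|exact: hZ].
- by move=> e; exfalso; apply: (disj (h p)); [rewrite e; exact: fY|exact: hZ].
- by apply: hinj; apply: mem_set.
Qed.

Section PairingGraph.
Variables (T : Type) (X Y0 : set T).
Implicit Types (G : set ((T * T) * T)) (Y : set T).

(* A pairing f on some Y with Y0 ⊆ Y ⊆ X is handled through its graph, so that
   the union of a chain of pairings is again one; Y is read off the diagonal. *)
Definition arg_dom G : set T := [set a | exists v, G ((a, a), v)].

Definition pairing_graph G :=
  [/\ one_to_one G,
      forall a b, arg_dom G a -> arg_dom G b -> exists v, G ((a, b), v),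
      forall a b v, G ((a, b), v) -> [/\ arg_dom G a, arg_dom G b & arg_dom G v],
      arg_dom G `<=` X & Y0 `<=` arg_dom G].

Definition graph Y (f : T * T -> T) : set ((T * T) * T) :=
  [set q | (Y `*` Y) q.1 /\ q.2 = f q.1].

Lemma pairing_graphP Y f :
  pairing Y f -> Y0 `<=` Y -> Y `<=` X -> pairing_graph (graph Y f).
Proof.
move=> [fY finj] Y0Y YX; rewrite /pairing_graph.
have -> : arg_dom (graph Y f) = Y.
  by apply/seteqP; split=> [a [v [[]]]//|a Ya]; exists (f (a, a)).
split=> //.
- move=> [p v] [q w] [/= Yp ->] [/= Yq ->]; split=> [->//|].
  by apply: finj; apply: mem_set.
- by move=> a b Ya Yb; exists (f (a, b)).
- by move=> a b v [[/= Ya Yb] ->]; split=> //; apply: fY.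
Qed.

Lemma pairing_graph_fun G (t0 : T) : pairing_graph G ->
  exists2 f, pairing (arg_dom G) f & G `<=` graph (arg_dom G) f.
Proof.
move=> [Ginj Gtot Gdom _ _].
have [f Gf finj] : exists2 f, (forall p, (arg_dom G `*` arg_dom G) p -> G (p, f p))
    & set_inj (arg_dom G `*` arg_dom G) f.
  by apply: (one_to_one_fun t0 Ginj) => -[a b] [/= da db]; exact: Gtot.
exists f; first by split=> // -[a b] /Gf /Gdom[].
move=> [[a b] v] Gabv; have [da db _] := Gdom _ _ _ Gabv; split=> //=.
by apply: (Ginj _ _ Gabv (Gf (a, b) (conj da db))).1.
Qed.

Lemma bigcup_pairing_graph F : F `<=` pairing_graph -> F !=set0 ->
  total_on F subset -> pairing_graph (\bigcup_(G in F) G).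
Proof.
move=> FP [G0 FG0] Ftot.
have domU a : arg_dom (\bigcup_(G in F) G) a <-> exists2 G, F G & arg_dom G a.
  by split=> [[v [G FG Gv]]|[G FG [v Gv]]]; [exists G => //; exists v|exists v, G].
split.
- by apply: bigcup_one_to_one => // G /FP[].
- move=> a b /domU[G1 FG1 [v1 G1v]] /domU[G2 FG2 [v2 G2v]].
  have [G FG [G1G G2G]] := chain_common_ub Ftot FG1 FG2.
  have [_ Gtot _ _ _] := FP _ FG.
  have [v Gv] := Gtot a b (ex_intro _ v1 (G1G _ G1v)) (ex_intro _ v2 (G2G _ G2v)).
  by exists v, G.
- move=> a b v [G FG Gv]; have [_ _ Gdom _ _] := FP _ FG.
  by have [da db dv] := Gdom _ _ _ Gv; split; apply/domU; exists G.
- by move=> a /domU[G FG da]; have [_ _ _ GX _] := FP _ FG; exact: GX.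
- by move=> a Y0a; apply/domU; exists G0 => //; have [_ _ _ _ +] := FP _ FG0; apply.
Qed.

Lemma pairing_graph_extend G : pairing_graph G -> [set: bool] #<= arg_dom G ->
  arg_dom G #<= X `\` arg_dom G -> exists2 G', pairing_graph G' & G `<` G'.
Proof.
move=> GP boolY YXY.
have [t0 Yt0] : arg_dom G !=set0.
  by have [b bY _] := card_le_injP (ex_intro _ true I) boolY; exists (b true); apply: bY.
have [f fP Gf] := pairing_graph_fun t0 GP.
have [_ _ Gdom YX Y0Y] := GP.
set Y := arg_dom G in boolY YXY t0 Yt0 fP Gf Gdom YX Y0Y *.
have [g gY ginj] := card_le_injP (ex_intro _ t0 Yt0) YXY.
pose Z := g @` Y.
have ZXY : Z `<=` X `\` Y by move=> _ [a Ya <-]; exact: gY.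
have YZ0 : Y `&` Z = set0.
  by apply/seteqP; split=> // a [Ya /ZXY[]].
have YZZ : (Y `|` Z) `*` (Y `|` Z) #<= Z.
  have YZY : Y `|` Z #<= Y.
    apply: card_le_trans (card_le_setU (card_image_le g Y)) _.
    exact: pairing_card_le_setX fP boolY.
  apply: card_le_trans (card_le_setX YZY YZY) (card_le_trans (card_le_inj fP.1 fP.2) _).
  by apply: (card_le_inj _ ginj) => a Ya; exists a.
have YZ2t0 : ((Y `|` Z) `*` (Y `|` Z)) (t0, t0) by split; left.
have [h hZ hinj] := card_le_injP (ex_intro _ _ YZ2t0) YZZ.
pose f' p := if `[< (Y `*` Y) p >] then f p else h p.
exists (graph (Y `|` Z) f').
  apply: pairing_graphP (pairing_extend YZ0 fP hZ hinj) _ _.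
    by move=> a /Y0Y; left.
  by move=> a [/YX//|/ZXY[]].
split.
  move=> [p v] /Gf[Yp /= ->]; split; first by split; left; case: Yp.
  by rewrite /f' asboolT.
move=> /(_ ((g t0, g t0), f' (g t0, g t0))) GYZ.
have /GYZ/Gdom[Yg _ _] : graph (Y `|` Z) f' ((g t0, g t0), f' (g t0, g t0)).
  by split=> //; split; right; exists t0.
by have [] := gY t0 Yt0.
Qed.
End PairingGraph.

Theorem card_setX_le T (X : set T) : infinite_set X -> X `*` X #<= X.
Proof.
move=> Xinf; have [io ioX ioinj] := card_le_injP (ex_intro _ 0 I) ((infiniteP X).1 Xinf).
pose Y0 := io @` [set: nat].
have Y0X : Y0 `<=` X by move=> _ [n _ <-]; exact: ioX.
have natY0 : [set: nat] #<= Y0 by apply: (card_le_inj _ ioinj) => n _; exists n.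
have [f0 f0P] : exists f0, pairing Y0 f0.
  have Y0Y0 : Y0 `*` Y0 #<= Y0.
    apply: card_le_trans (card_le_setX (card_image_le io _) (card_image_le io _)) _.
    apply: card_le_trans (card_le_trans (subset_card_le (@subsetT _ _)) _) natY0.
    by have /card_eqPle[] := card_nat2.
  have Y0io0 : (Y0 `*` Y0) (io 0, io 0) by split; exact: imageT.
  by have [f0 f0Y f0inj] := card_le_injP (ex_intro _ _ Y0io0) Y0Y0; exists f0.
have [G [GP Gmax]] := Zorn_bigcup_nonempty
  (ex_intro _ _ (pairing_graphP f0P (@subset_refl _ Y0) Y0X))
  (@bigcup_pairing_graph _ X Y0).
have [_ _ _ YX Y0Y] := GP.
have boolY : [set: bool] #<= arg_dom G.
  apply: card_le_trans (subset_card_le Y0Y); apply: card_le_trans natY0.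
  by apply: (@card_le_inj _ _ _ _ nat_of_bool) => // -[] [].
have [f fP _] := pairing_graph_fun (io 0) GP.
have XYY : X `\` arg_dom G #<= arg_dom G.
  have [//|/(pairing_graph_extend GP boolY)[G' G'P GG']] :=
    card_le_total (X `\` arg_dom G) (arg_dom G).
  by case: (Gmax G' GG').
have XY : X #<= arg_dom G.
  apply: card_le_trans (pairing_card_le_setX fP boolY).
  apply: card_le_trans (card_le_setU XYY).
  by apply: subset_card_le => x Xx; have [Yx|nYx] := pselect (arg_dom G x); [left|right].
apply: card_le_trans (card_le_setX XY XY) _.
exact: card_le_trans (card_le_inj fP.1 fP.2) (subset_card_le YX).
Qed.

Lemma card_setXnat_le T (X : set T) : infinite_set X -> X `*` [set: nat] #<= X.
Proof.
move=> Xinf; apply: card_le_trans (card_setX_le Xinf).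
exact: card_le_setX (card_lexx X) ((infiniteP X).1 Xinf).
Qed.

(** * Reaping families *)

Lemma finite_nat_ub (A : set nat) : finite_set A -> exists M, forall a, A a -> a < M.
Proof.
move=> /finite_seqP[s ->]; exists (\max_(a <- s) a).+1 => a sa.
by rewrite ltnS leq_bigmax_seq.
Qed.

Lemma infinite_natP (A : set nat) : infinite_set A <-> forall n, exists2 a, n <= a & A a.
Proof.
split=> [Ainf n|Aunb /finite_nat_ub[M AM]]; last first.
  by have [a Ma /AM] := Aunb M; rewrite ltnNge Ma.
apply: contrapT => nA; apply: Ainf; apply: sub_finite_set (finite_II n) => a Aa /=.
by rewrite ltnNge; apply/negP => na; apply: nA; exists a.
Qed.

Lemma infinite_set_unbounded T (Y : set T) (g : T -> nat) :
  (forall n, exists2 y, Y y & n <= g y) -> infinite_set Y.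
Proof.
move=> Yunb /(finite_image g)/finite_nat_ub[M HM].
by have [y Yy My] := Yunb M; have := HM _ (imageP g Yy); rewrite ltnNge My.
Qed.

Lemma increasing_choice (A : nat -> set nat) : (forall n, infinite_set (A n)) ->
  exists2 p : nat -> nat, (forall n, A n (p n)) & forall n, p n < p n.+1.
Proof.
move=> Ainf.
have /choice[next nextP] : forall nm : nat * nat, exists a, nm.2 < a /\ A nm.1 a.
  by move=> [n m]; have [a ma Aa] := (infinite_natP _).1 (Ainf n) m.+1; exists a.
pose p := fix p n := if n is n'.+1 then next (n, p n') else next (0, 0).
exists p => [[|n]|n]; [exact: (nextP (0, 0)).2|exact: (nextP (n.+1, p n)).2|].
exact: (nextP (n.+1, p n)).1.
Qed.

Lemma finite_family_split (s : seq (set nat)) : (forall A, A \in s -> infinite_set A) ->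
  exists B, infinite_set B /\ forall A, A \in s -> splits B A.
Proof.
move=> sinf; pose k := size s; pose An n := nth setT s (n./2 %% k).
have [p pA pS] : exists2 p, (forall n, An n (p n)) & forall n, p n < p n.+1.
  apply: increasing_choice => n; rewrite /An.
  have [lt|ge] := ltnP (n./2 %% k) k; first by apply: sinf; exact: mem_nth.
  by rewrite nth_default //; exact: infinite_nat.
have pinj : injective p by apply/incn_inj/leq_mono/(homo_ltn ltn_trans pS).
have pge n : n <= p n by elim: n => // n IH; apply: leq_ltn_trans IH (pS n).
(* Each A ∈ s is the target of infinitely many odd and even indices n. *)
pose B := p @` [set n | odd n].
have Bp n : B (p n) <-> odd n by split=> [[m om /pinj <-]|on]; [|exists n].
exists B; split.
  apply: (infinite_set_unbounded (g := id)) => n; exists (p n.*2.+1).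
    by apply/Bp; rewrite /= odd_double.
  by apply: leq_trans (pge _); rewrite ltnW // ltnS -addnn leq_addr.
move=> A As; pose i := index A s.
have k0 : 0 < k by rewrite /k; case: (s) As.
have Ai (b : bool) n : A (p (b + (n * k + i).*2)).
  move: (pA (b + (n * k + i).*2)); rewrite /An half_bit_double modnMDl modn_small.
    by rewrite nth_index.
  by rewrite index_mem.
have oddi (b : bool) n : odd (b + (n * k + i).*2) = b by rewrite oddD odd_double addbF oddb.
have nk (b : bool) n : n <= p (b + (n * k + i).*2).
  apply: leq_trans (pge _); apply: leq_trans _ (leq_addl b _).
  rewrite -addnn; apply: leq_trans _ (leq_addr _ _).
  exact: leq_trans (leq_pmulr n k0) (leq_addr _ _).
split.
  apply: (infinite_set_unbounded (g := id)) => n; exists (p (true + (n * k + i).*2)).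
    by split; [exact: Ai|apply/Bp; rewrite oddi].
  exact: nk.
apply: (infinite_set_unbounded (g := id)) => n; exists (p (false + (n * k + i).*2)).
  by split; [exact: Ai|move/Bp; rewrite oddi].
exact: nk.
Qed.

Lemma reaping_infinite R : reaping_family R -> infinite_set R.
Proof.
move=> [Rinf Rns] /finite_seqP[s Rs]; apply: Rns; rewrite Rs in Rinf *.
have [B [Binf sB]] := finite_family_split Rinf.
by exists B.
Qed.

Lemma reaping_unsplit R B : reaping_family R -> exists2 A, R A & ~ splits B A.
Proof.
move=> [Rinf Rns]; apply: contrapT => /forall2NP RB; apply: Rns.
have [Binf|Bfin] := pselect (infinite_set B).
  by exists B; split=> // A RA; have [//|/contrapT] := RB A.
exists (~` B); split.
  move=> CBfin; apply: infinite_nat.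
  by rewrite -(setUv B) finite_setU; split=> //; exact: contrapT.
move=> A RA; have [//|/contrapT[AB ADB]] := RB A.
by split; rewrite ?setDE ?setCK.
Qed.

Lemma unsplit_eventually (A B : set nat) :
  ~ splits B A -> exists (b : bool) M, forall a, A a -> M <= a -> (B a <-> b).
Proof.
move=> nAB; have [fin|inf] := pselect (finite_set (A `&` B)).
  have [M AM] := finite_nat_ub fin; exists false, M => a Aa Ma; split=> // Ba.
  by have := AM a (conj Aa Ba); rewrite ltnNge Ma.
have fin : finite_set (A `\` B) by apply: contrapT => inf'; apply: nAB; split.
have [M AM] := finite_nat_ub fin; exists true, M => a Aa Ma; split=> // _.
by apply: contrapT => nBa; have := AM a (conj Aa nBa); rewrite ltnNge Ma.
Qed.

(** * Lower bound: reaping families from cov^*-families *)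

Definition branch (P : nat -> bool) : set (seq bool) := range (mkseq P).

Lemma branch_infinite P : infinite_set (branch P).
Proof.
apply: (infinite_set_unbounded (g := size)) => n.
by exists (mkseq P n); [exists n|rewrite size_mkseq].
Qed.

Lemma S_of_branch_finite (A : set nat) P a a' :
  A a -> A a' -> P a != P a' -> finite_set (S_of A `&` branch P).
Proof.
move=> Aa Aa' Paa'.
apply: sub_finite_set (finite_image (mkseq P) (finite_II (maxn a a').+1)).
move=> s [SA [n _ sE]]; exists n => //=; rewrite ltnS leqNgt; apply/negP => aa'n.
have [aa' a'a] : a < n /\ a' < n.
  by split; apply: leq_ltn_trans aa'n; rewrite ?leq_maxl ?leq_maxr.
move: (SA a a' Aa Aa'); rewrite -sE size_mkseq !nth_mkseq // => /(_ aa' a'a).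
by move/eqP: Paa'.
Qed.

Lemma splitting_branch_finite (As : seq (set nat)) (B : set nat) (Z : set (seq bool)) :
  (forall A, A \in As -> splits B A) ->
  (forall s, Z s -> exists2 A, A \in As & S_of A s) ->
  finite_set (Z `&` branch (fun n => `[< B n >])).
Proof.
move=> Bsplit ZAs; set b := branch _.
apply: (@sub_finite_set _ _ (\bigcup_(A in [set` As]) (S_of A `&` b))).
  by move=> s [/ZAs[A AAs SAs] bs]; exists A => //; split.
apply: bigcup_finite; first exact: finite_seq.
move=> A /Bsplit[/infinite_setN0[a [Aa Ba]] /infinite_setN0[a' [Aa' nBa']]].
by apply: (S_of_branch_finite Aa Aa'); rewrite asboolT ?asboolF.
Qed.

Lemma cov_star_reaping F : cov_star_family Spl F -> exists2 G, reaping_family G & G #<= F.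
Proof.
move=> [FSpl Fcov]; have /choice[L LF] : forall Z, exists As : seq (set nat), F Z ->
    (forall A, A \in As -> infinite_set A) /\
    forall s, Z s -> exists2 A, A \in As & S_of A s.
  move=> Z; have [/FSpl[As HAs]|nFZ] := pselect (F Z).
    by exists As.
  by exists [::] => /nFZ.
pose G := [set A | exists2 Z, F Z & A \in L Z].
have Grp : reaping_family G.
  split=> [A [Z FZ AL]|[B [_ BG]]]; first exact: (LF Z FZ).1.
  have [Z FZ ZI] := Fcov _ (@branch_infinite (fun n => `[< B n >])).
  by apply/ZI/(splitting_branch_finite _ (LF Z FZ).2) => A AL; apply: BG; exists Z.
exists G => //.
have Finf : infinite_set F.
  move=> Ffin; apply: (reaping_infinite Grp).
  apply: (@sub_finite_set _ _ (\bigcup_(Z in F) [set` L Z])).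
    by move=> A [Z FZ AL]; exists Z.
  by apply: bigcup_finite => // Z _; exact: finite_seq.
have /choice[cover coverP] : forall A, exists Z, G A -> F Z /\ A \in L Z.
  by move=> A; have [[Z FZ AL]|nGA] := pselect (G A); [exists Z|exists set0 => /nGA].
apply: card_le_trans (card_setXnat_le Finf).
apply: (@card_le_inj _ _ _ _ (fun A => (cover A, index A (L (cover A))))).
  by move=> A /coverP[FZ _].
move=> A A' /set_mem/coverP[_ AL] /set_mem/coverP[_ AL'] [e ei].
by rewrite -(nth_index set0 AL) -(nth_index set0 AL') ei e.
Qed.

(** * Upper bound: cov^*-families from reaping families *)

Fixpoint rank (A : set nat) (n : nat) : nat :=
  if n is m.+1 then rank A m + `[< A m >] else 0.

Lemma rank_mono A : {homo rank A : m n / m <= n}.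
Proof. by apply: homo_leq => // [m n p|n]; [exact: leq_trans|exact: leq_addr]. Qed.

Lemma rank_lt (A : set nat) a b : A a -> a < b -> rank A a < rank A b.
Proof.
by move=> Aa ab; apply: leq_trans _ (rank_mono A ab); rewrite /= asboolT // addn1.
Qed.

Lemma rank_inj (A : set nat) a b : A a -> A b -> rank A a = rank A b -> a = b.
Proof.
move=> Aa Ab e; case: (ltngtP a b) => // ab.
  by have := rank_lt Aa ab; rewrite e ltnn.
by have := rank_lt Ab ab; rewrite e ltnn.
Qed.

Lemma rank_surj (A : set nat) : infinite_set A -> forall r, exists2 a, A a & rank A a = r.
Proof.
move=> Ainf r; have rank_unb : exists n, r < rank A n.
  elim: r => [|r [n rn]].
    have [a _ Aa] := (infinite_natP A).1 Ainf 0.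
    by exists a.+1; rewrite /= asboolT // addn1.
  have [a na Aa] := (infinite_natP A).1 Ainf n; exists a.+1.
  by apply: leq_trans (rank_lt Aa (ltnSn a)); apply: leq_trans rn (rank_mono A na).
case: (ex_minnP rank_unb) => -[//|m] rm mmin.
have rm' : rank A m <= r by rewrite leqNgt; apply/negP => /mmin; rewrite ltnn.
move: rm => /=; case: asboolP => Am; last by rewrite addn0 ltnNge rm'.
by rewrite addn1 ltnS => rmr; exists m => //; apply/eqP; rewrite eqn_leq rm' rmr.
Qed.

(* [ranked A C m] = {e_A(c) | c ∈ C} ∩ [m, ∞), where e_A enumerates A increasingly. *)
Definition ranked (A C : set nat) (m : nat) : set nat :=
  [set a | [/\ A a, C (rank A a) & m <= a]].

Lemma ranked_infinite A C m :
  infinite_set A -> infinite_set C -> infinite_set (ranked A C m).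
Proof.
move=> Ainf Cinf; apply/infinite_natP => n.
have [r rge Cr] := (infinite_natP C).1 Cinf (rank A (n + m)).
have [a Aa ra] := rank_surj Ainf r.
have nma : n + m <= a.
  by rewrite leqNgt; apply/negP => /(rank_lt Aa); rewrite ra ltnNge rge.
exists a; first exact: leq_trans (leq_addr m n) nma.
by split=> //; [rewrite ra|exact: leq_trans (leq_addl n m) nma].
Qed.

Lemma infinite_prefix_rcons (Y : set (seq bool)) p :
  infinite_set [set s | Y s /\ prefix p s] ->
  exists b : bool, infinite_set [set s | Y s /\ prefix (rcons p b) s].
Proof.
move=> Yp; apply: contrapT => /forallNP nYpb; apply: Yp.
apply: (@sub_finite_set _ _ ([set p] `|` ([set s | Y s /\ prefix (rcons p true) s]
    `|` [set s | Y s /\ prefix (rcons p false) s]))); last first.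
  rewrite !finite_setU; split; first exact: finite_set1.
  by split; apply: contrapT; apply: nYpb.
move=> s [Ys /prefixP[[|b t] sE]]; subst s; first by left; rewrite cats0.
by right; case: b Ys => Ys; [left|right]; split=> //; rewrite -cat_rcons prefix_prefix.
Qed.

Lemma branch_accumulation (Y : set (seq bool)) : infinite_set Y ->
  exists x : nat -> bool, forall n, exists2 s, Y s & prefix (mkseq x n) s.
Proof.
move=> Yinf; pose Inf p := infinite_set [set s | Y s /\ prefix p s].
have /choice[next nextP] : forall p, exists b : bool, Inf p -> Inf (rcons p b).
  move=> p; have [/infinite_prefix_rcons[b Ipb]|nIp] := pselect (Inf p).
    by exists b.
  by exists true => /nIp.
pose pre := fix pre n := if n is m.+1 then rcons (pre m) (next (pre m)) else [::].
have Ipre n : Inf (pre n).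
  elim: n => [|n IH] /=; last exact: nextP.
  by apply: sub_infinite_set Yinf => s Ys; split=> //; exact: prefix0s.
pose x n := nth false (pre n.+1) n.
have preE n : pre n = mkseq x n.
  elim: n => // n IH; rewrite mkseqS -IH /x /=; congr rcons.
  by rewrite nth_rcons IH size_mkseq ltnn eqxx.
exists x => n; have /infinite_setN0[s [Ys ps]] := Ipre n.
by exists s; rewrite -?preE.
Qed.

Lemma converging_subsequence (Y : set (seq bool)) : infinite_set Y ->
  exists x (sigma : nat -> seq bool) (N : nat -> nat), forall j,
  [/\ Y (sigma j), N j <= size (sigma j) < N j.+1
    & forall i, i < N j -> nth false (sigma j) i = x i].
Proof.
move=> /branch_accumulation[x xY].
have /choice[ext extP] : forall n, exists s, Y s /\ prefix (mkseq x n) s.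
  by move=> n; have [s Ys ps] := xY n; exists s.
pose N j := iter j (fun n => (size (ext n)).+1) 0.
exists x, (ext \o N), N => j; have [Ys /prefixP[t sE]] := extP (N j).
split=> //=; first by rewrite ltnSn andbT sE size_cat size_mkseq leq_addr.
by move=> i iN; rewrite sE nth_cat size_mkseq iN nth_mkseq.
Qed.

Lemma interval_index_uniq (N : nat -> nat) : (forall j, N j < N j.+1) ->
  forall i j a, N i <= a < N i.+1 -> N j <= a < N j.+1 -> i = j.
Proof.
move=> NS; have Nmono := homo_leq leqnn leq_trans (fun j => ltnW (NS j)).
move=> i j a /andP[ia ai] /andP[ja aj]; apply/eqP; rewrite eqn_leq.
apply/andP; split; rewrite leqNgt; apply/negP => lt.
  by have := leq_trans (Nmono _ _ lt) ia; rewrite leqNgt aj.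
by have := leq_trans (Nmono _ _ lt) ja; rewrite leqNgt ai.
Qed.

Lemma reaping_intervals R (N : nat -> nat) :
  reaping_family R -> (forall j, N j < N j.+1) ->
  exists2 A, R A & exists (q : bool) M,
    forall a j, A a -> M <= a -> odd j = q -> ~~ (N j <= a < N j.+1).
Proof.
move=> Rrp NS; pose B := [set a | exists2 j, odd j & N j <= a < N j.+1].
have [A RA /unsplit_eventually[b [M AB]]] := reaping_unsplit B Rrp.
exists A => //; exists (~~ b), M => a j Aa Ma oj; apply/negP => ja.
have [aB Ba] := AB a Aa Ma; case: b oj {AB} aB Ba => oj aB Ba.
  have [j' oj' j'a] := Ba erefl.
  by move: oj'; rewrite (interval_index_uniq NS j'a ja) oj.
by have := aB (ex_intro2 _ _ j oj ja).
Qed.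

Lemma reaping_homogeneous R (A : set nat) (x : nat -> bool) : reaping_family R ->
  infinite_set A -> exists2 C, R C & exists (c : bool) M,
    forall a, A a -> C (rank A a) -> M <= a -> x a = c.
Proof.
move=> Rrp Ainf; pose B := [set r | exists2 a, A a /\ rank A a = r & x a].
have [C RC /unsplit_eventually[c [M CB]]] := reaping_unsplit B Rrp.
have [a0 Aa0 ra0] := rank_surj Ainf M.
exists C => //; exists c, a0 => a Aa Ca a0a.
have [BC CB'] := CB _ Ca (leq_trans (eq_leq (esym ra0)) (rank_mono A a0a)).
case: (boolP (x a)) => xa; first by rewrite BC //; exists a.
apply/esym/negbTE/negP => /CB'[a' [Aa' /(rank_inj Aa' Aa) e] xa'].
by rewrite -e xa' in xa.
Qed.

Lemma reaping_cover R (Y : set (seq bool)) : reaping_family R -> infinite_set Y ->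
  exists A C m, [/\ R A, R C & infinite_set (S_of (ranked A C m) `&` Y)].
Proof.
move=> Rrp /converging_subsequence[x [sigma [N sigmaP]]].
have NS j : N j < N j.+1 by have [_ /andP[] + + _] := sigmaP j; exact: leq_ltn_trans.
have [A RA [q [M1 Aq]]] := reaping_intervals Rrp NS.
have [C RC [c [M2 xc]]] := reaping_homogeneous x Rrp (Rrp.1 A RA).
exists A, C, (maxn M1 M2); split=> //.
have Nge j : j <= N j by elim: j => // j IH; apply: leq_ltn_trans IH (NS j).
apply: (infinite_set_unbounded (g := size)) => n.
have [Ys /andP[Ns sN] agree] := sigmaP (q + n.*2).
exists (sigma (q + n.*2)); last first.
  by apply: leq_trans (leq_trans (Nge _) Ns); rewrite -addnn addnA leq_addl.
split=> // i j Di Dj; suff Dc d : ranked A C (maxn M1 M2) d ->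
    d < size (sigma (q + n.*2)) -> nth false (sigma (q + n.*2)) d = c.
  by move=> ? ?; rewrite !Dc.
move=> [Ad Cd]; rewrite geq_max => /andP[M1d M2d] ds; rewrite agree; first exact: xc.
(* d < size σ_j < N_{j+1} and A avoids [N_j, N_{j+1}), so σ_j agrees with x at d. *)
rewrite ltnNge; apply/negP => Nd.
have := Aq d (q + n.*2) Ad M1d; rewrite oddD odd_double addbF oddb => /(_ erefl).
by rewrite Nd (ltn_trans ds sN).
Qed.

Lemma reaping_cov_star R : reaping_family R -> exists2 F, cov_star_family Spl F & F #<= R.
Proof.
move=> Rrp; exists [set S_of (ranked p.1.1 p.1.2 p.2) | p in (R `*` R) `*` [set: nat]].
  split=> [_ [[[A C] m] [[/= RA RC] _] <-]|Y Yinf].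
    exists [:: ranked A C m]; split=> [D|s SDs].
      by rewrite mem_seq1 => /eqP->; apply: ranked_infinite; apply: Rrp.1.
    by exists (ranked A C m); rewrite ?mem_seq1.
  have [A [C [m [RA RC ACm]]]] := reaping_cover Rrp Yinf.
  by exists (S_of (ranked A C m)) => //; exists (A, C, m).
have Rinf := reaping_infinite Rrp.
apply: card_le_trans (card_image_le _ _) _; apply: card_le_trans (card_setXnat_le Rinf).
exact: card_le_setX (card_setX_le Rinf) (card_lexx _).
Qed.

Theorem mainTheorem5 : min_card_eq (cov_star_family Spl) reaping_family.
Proof. by split=> [F /cov_star_reaping|R /reaping_cov_star]. Qed.
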